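(* Let $q\ge1$ be an integer such that $b^q\ge 2$ and suppose that $E(q,x)\ne\mathcal{A}^q\times\mathcal{A}^q$ for every $x\in[0,1)$. Then $\sigma(q)\le b^q-2+2/\alpha$, where $\alpha=\alpha(b,q)>1$ satisfies $2-\alpha=(b^q-2)\alpha(\alpha-1)$.
   Context: Standing setup: $b\ge2$ integer, $\mathcal{A}=\{0,\dots,b-1\}$, $\gamma\in(1/b,1)$, $\psi$ a $\mathbb{Z}$-periodic $C^1$ function. $S(x,\mathbf{i})=\sum_{n\ge1}\gamma^{n-1}\psi\big(\frac{x+i_1+i_2b+\cdots+i_nb^{n-1}}{b^n}\big)$, $S'=\partial_xS$. For $\mathbf{u}\in\mathcal{A}^q$, $x(\mathbf{u})=(x+u_1+u_2b+\cdots+u_qb^{q-1})/b^q$. Sequences $\mathbf{i},\mathbf{j}$ are $(\varepsilon,\delta)$-tangent at $x_0$ if $|S(x_0,\mathbf{i})-S(x_0,\mathbf{j})|\le\varepsilon$ and $|S'(x_0,\mathbf{i})-S'(x_0,\mathbf{j})|\le\delta$. $E(q,x_0;\varepsilon,\delta)$: pairs $(\mathbf{k},\mathbf{l})\in\mathcal{A}^q\times\mathcal{A}^q$ such that some concatenations $\mathbf{ku},\mathbf{lv}$ ($\mathbf{u},\mathbf{v}\in\mathcal{A}^{\mathbb{Z}^+}$) are $(\varepsilon,\delta)$-tangent at $x_0$; $E(q,x_0)=\bigcap_{\varepsilon,\delta>0}E(q,x_0;\varepsilon,\delta)$. Weight function: measurable $\omega:[0,1)\to(0,\infty)$ with $\omega,1/\omega$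 bounded. Admissible testing function of order $q$: measurable $V:[0,1)\times\mathcal{A}^q\times\mathcal{A}^q\to[0,\infty)$ such that for some $\varepsilon,\delta>0$, $V(x,\mathbf{u},\mathbf{v})V(x,\mathbf{v},\mathbf{u})\ge1$ whenever $x\in[0,1)$ and $(\mathbf{u},\mathbf{v})\in E(q,x;\varepsilon,\delta)$. $\Sigma_{V,\omega}(x)=\sup_{\mathbf{u}}\frac{\omega(x)}{\omega(x(\mathbf{u}))}\sum_{\mathbf{v}}V(x,\mathbf{u},\mathbf{v})$; $\sigma(q)=\inf_{\omega,V}\|\Sigma_{V,\omega}\|_\infty$. *)

From Stdlib Require Import Reals ClassicalEpsilon.
From mathcomp Require Import all_boot.
Unset Printing Implicit Defensive.
Local Open Scope R_scope.

Definition null_set (A : R -> Prop) : Prop :=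
  forall eps, 0 < eps -> exists a c : nat -> R,
    (forall n, a n <= c n) /\
    (forall x, A x -> exists n, a n < x < c n) /\
    (forall N, sum_f_R0 (fun n => c n - a n) N <= eps).

Inductive borel : (R -> Prop) -> Prop :=
  | borel_interval : forall a c, borel (fun x => a < x < c)
  | borel_compl : forall A, borel A -> borel (fun x => ~ A x)
  | borel_union : forall An : nat -> R -> Prop,
      (forall n, borel (An n)) -> borel (fun x => exists n, An n x)
  | borel_ext : forall A B, borel A -> (forall x, A x <-> B x) -> borel B.

Definition leb_measurable (A : R -> Prop) : Prop :=
  exists B Z, borel B /\ null_set Z /\
    (forall x, (A x /\ ~ B x) \/ (B x /\ ~ A x) -> Z x).

Definition measurable01 (f : R -> R) : Prop :=
  forall c, leb_measurable (fun x => 0 <= x < 1 /\ c < f x).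

Definition esssup_le (f : R -> R) (c : R) : Prop :=
  null_set (fun x => 0 <= x < 1 /\ c < f x).

(* Value of a (convergent) series; arbitrary if it diverges. *)
Definition series (u : nat -> R) : R :=
  epsilon (inhabits 0) (fun l => infinite_sum u l).

(* Derivative of f at x (arbitrary if f is not differentiable at x). *)
Definition deriv_at (f : R -> R) (x : R) : R :=
  epsilon (inhabits 0) (fun l => derivable_pt_lim f x l).

(* Digit sequences i = (i_1, i_2, ...) in A^{Z+}, stored 0-indexed: i n = i_{n+1}. *)
Definition digit {b : nat} (d : 'I_b) : R := INR (nat_of_ord d).

Definition partial_pt (b : nat) (x : R) (i : nat -> 'I_b) (n : nat) : R :=
  x + \big[Rplus/0]_(k < n) (digit (i k) * INR b ^ k).

(* S(x,i) = sum_{n>=1} gamma^(n-1) psi((x + i_1 + ... + i_n b^(n-1)) / b^n) *)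
Definition Sf (b : nat) (gamma : R) (psi : R -> R) (x : R) (i : nat -> 'I_b) : R :=
  series (fun m => gamma ^ m * psi (partial_pt b x i (m.+1) / INR b ^ (m.+1))).

Definition Sf' (b : nat) (gamma : R) (psi : R -> R) (x : R) (i : nat -> 'I_b) : R :=
  deriv_at (fun y => Sf b gamma psi y i) x.

Definition tangent (b : nat) (gamma : R) (psi : R -> R) (x0 eps delta : R)
  (i j : nat -> 'I_b) : Prop :=
  Rabs (Sf b gamma psi x0 i - Sf b gamma psi x0 j) <= eps /\
  Rabs (Sf' b gamma psi x0 i - Sf' b gamma psi x0 j) <= delta.

(* words of length q: u = (u_1,...,u_q), stored 0-indexed *)
Notation word b q := {ffun 'I_q -> 'I_b}.

Definition concat (b q : nat) (k : word b q) (u : nat -> 'I_b) : nat -> 'I_b :=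
  fun n => match @insub nat (fun m => m < q)%N _ n with
           | Some i => k i
           | None => u (n - q)%N
           end.

Definition xu (b q : nat) (x : R) (u : word b q) : R :=
  (x + \big[Rplus/0]_(k < q) (digit (u k) * INR b ^ k)) / INR b ^ q.

Definition E_ed (b : nat) (gamma : R) (psi : R -> R) (q : nat) (x0 eps delta : R)
  (k l : word b q) : Prop :=
  exists u v : nat -> 'I_b, tangent b gamma psi x0 eps delta (concat b q k u) (concat b q l v).

Definition E (b : nat) (gamma : R) (psi : R -> R) (q : nat) (x0 : R)
  (k l : word b q) : Prop :=
  forall eps delta, 0 < eps -> 0 < delta -> E_ed b gamma psi q x0 eps delta k l.

Definition weight (omega : R -> R) : Prop :=
  measurable01 omega /\ (forall x, 0 <= x < 1 -> 0 < omega x) /\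
  exists M, forall x, 0 <= x < 1 -> omega x <= M /\ / omega x <= M.

Definition admissible (b : nat) (gamma : R) (psi : R -> R) (q : nat)
  (V : R -> word b q -> word b q -> R) : Prop :=
  (forall u v, measurable01 (fun x => V x u v)) /\
  (forall x u v, 0 <= x < 1 -> 0 <= V x u v) /\
  exists eps delta, 0 < eps /\ 0 < delta /\
    forall x u v, 0 <= x < 1 -> E_ed b gamma psi q x eps delta u v ->
      1 <= V x u v * V x v u.

(* Sigma_{V,omega}(x) = sup_u omega(x)/omega(x(u)) * sum_v V(x,u,v)
   (finite max of nonnegative terms, so max with 0 is the sup) *)
Definition Sigma (b q : nat) (V : R -> word b q -> word b q -> R) (omega : R -> R)
  (x : R) : R :=
  \big[Rmax/0]_(u : word b q)
     (omega x / omega (xu b q x u) * \big[Rplus/0]_(v : word b q) V x u v).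

(* sigma(q) <= c, sigma(q) being the infimum of ||Sigma_{V,omega}||_oo *)
Definition sigma_le (b : nat) (gamma : R) (psi : R -> R) (q : nat) (c : R) : Prop :=
  forall eta, 0 < eta -> exists (omega : R -> R) (V : R -> word b q -> word b q -> R),
    weight omega /\ admissible b gamma psi q V /\ esssup_le (Sigma b q V omega) (c + eta).

(* Since psi is C^1 and 1-periodic, S(x, i) and S'(x, i) are continuous in x
   uniformly in i, and S(x + 1, i) = S(x, i + 1), where i + 1 adds one with carry
   to the b-adic digits of i.  Hence a pair of words that is not tangent at x with
   margin m stays non-tangent with margin m/2 near x, and at x = 1 this follows
   from x = 0 by a carry.  Compactness of [0, 1] then gives a margin e > 0 and a
   mesh 1/M such that on each cell [j/M, (j+1)/M) one pair (k, l) of distinct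
   words is not (e, e)-tangent.  On that cell take omega = 1 and the testing
   function which, on the rows k and l, is 1 on the diagonal, 0 at (k, l) and
   (l, k) and alpha elsewhere, and on the other rows is 1/alpha in the columns
   k, l and 1 elsewhere.  Then V(u, v) V(v, u) >= 1 except at (k, l) and (l, k),
   and the equation defining alpha makes every row sum b^q - 2 + 2/alpha. *)

From Stdlib Require Import Reals Ranalysis5 Lra Lia Psatz ZArith.
From Stdlib Require Import FunctionalExtensionality Classical ClassicalEpsilon.
From mathcomp Require Import all_boot zify.
From HB Require Import structures.
From Coquelicot Require Compactness.
Local Open Scope R_scope.

Lemma series_cv (u : nat -> R) :
  (exists l, Un_cv (sum_f_R0 u) l) -> Un_cv (sum_f_R0 u) (series u).
Proof. exact: epsilon_spec. Qed.

Lemma deriv_at_eq (f : R -> R) x l : derivable_pt_lim f x l -> deriv_at f x = l.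
Proof.
  move=> Hl; apply: (uniqueness_limite f x) (Hl).
  by apply: (epsilon_spec (inhabits 0) (derivable_pt_lim f x)); exists l.
Qed.

Lemma Un_cv_abs_le (u : nat -> R) l B :
  Un_cv u l -> (forall n, Rabs (u n) <= B) -> Rabs l <= B.
Proof.
  move=> Hu HB; have cst c : Un_cv (fun _ => c) c.
    by move=> e He; exists 0%N => n _; rewrite /R_dist Rminus_diag Rabs_R0.
  apply: Rabs_le; split.
  - apply: (@Rle_cv_lim (fun _ => - B) u _ _ _ (cst _) Hu) => n.
    by have := HB n; have := Rle_abs (u n); have := Rle_abs (- u n); rewrite Rabs_Ropp; lra.
  - apply: (@Rle_cv_lim u (fun _ => B) _ _ _ Hu (cst _)) => n.
    by have := HB n; have := Rle_abs (u n); have := Rle_abs (- u n); rewrite Rabs_Ropp; lra.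
Qed.

Lemma pow_lt_eventually g eps :
  0 <= g < 1 -> 0 < eps -> exists N, forall n, (N <= n)%N -> g ^ n < eps.
Proof.
  move=> Hg He; have [N HN] := pow_lt_1_zero g ltac:(rewrite Rabs_right; lra) eps He.
  exists N => n /leP Hn; have := HN n Hn.
  by rewrite Rabs_right //; apply/Rle_ge/pow_le; lra.
Qed.

Lemma geom_tail_vanish {K g eps : R} : 0 <= K -> 0 <= g < 1 ->
  0 < eps -> exists N, forall n, (N <= n)%N -> K * g ^ n.+1 / (1 - g) < eps.
Proof.
  move=> K_ge0 Hg He; have [N HN] := pow_lt_eventually g (eps * (1 - g) / (K + 1)) Hg
    ltac:(apply: Rdiv_lt_0_compat; have := K_ge0; nra).
  exists N => n Hn; have Hsmall := HN n.+1 ltac:(lia).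
  have Hpos := pow_le g n.+1 (proj1 Hg).
  have Hkg : K * g ^ n.+1 < eps * (1 - g).
    have -> : eps * (1 - g) = (K + 1) * (eps * (1 - g) / (K + 1)) by field; lra.
    nra.
  apply: (Rmult_lt_reg_r (1 - g)); first lra.
  by have -> : K * g ^ n.+1 / (1 - g) * (1 - g) = K * g ^ n.+1 by field; lra.
Qed.

Section GeometricDomination.

Variables (a : nat -> R) (K g : R).
Hypotheses (Hg : 0 <= g < 1) (Ha : forall m, Rabs (a m) <= K * g ^ m).

Let K_ge0 : 0 <= K.
Proof. by have := Ha 0; have := Rabs_pos (a 0%N); rewrite /= Rmult_1_r; lra. Qed.

Lemma sum_f_R0_tail_le n N :
  Rabs (sum_f_R0 a (N + n) - sum_f_R0 a n) <= K * g ^ n.+1 / (1 - g).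
Proof.
  suff tail_le : Rabs (sum_f_R0 a (N + n) - sum_f_R0 a n)
                 <= K * g ^ n.+1 * (1 - g ^ N) / (1 - g).
    apply: (Rle_trans _ _ _ tail_le); rewrite /Rdiv; apply: Rmult_le_compat_r.
      by apply/Rlt_le/Rinv_0_lt_compat; lra.
    have := pow_le g N (proj1 Hg).
    have := Rmult_le_pos _ _ K_ge0 (pow_le g n.+1 (proj1 Hg)); nra.
  elim: N => [|N IH].
    by rewrite add0n Rminus_diag Rabs_R0 /= Rminus_diag Rmult_0_r /Rdiv Rmult_0_l; lra.
  rewrite addSn /=.
  have Hlast : Rabs (a (N + n).+1) <= K * (g ^ n.+1 * g ^ N).
    by rewrite -pow_add (_ : Nat.add n.+1 N = (N + n).+1); [apply: Ha | lia].
  have Htri := Rabs_triang (sum_f_R0 a (N + n) - sum_f_R0 a n) (a (N + n).+1).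
  have -> : K * g ^ n.+1 * (1 - g * g ^ N) / (1 - g)
            = K * g ^ n.+1 * (1 - g ^ N) / (1 - g) + K * (g ^ n.+1 * g ^ N).
    by rewrite /=; field; lra.
  by rewrite Rplus_minus_swap; lra.
Qed.

Lemma geom_dominated_cv : exists l, Un_cv (sum_f_R0 a) l.
Proof.
  suff Hc : Cauchy_crit (sum_f_R0 a) by have [l Hl] := R_complete _ Hc; exists l.
  move=> eps He.
  have Heps2 : 0 < eps / 2 by lra.
  have [N HN] := geom_tail_vanish K_ge0 Hg Heps2.
  have near_N p : (N <= p)%N -> Rabs (sum_f_R0 a p - sum_f_R0 a N) < eps / 2.
    move=> Hp; rewrite -(subnK Hp).
    exact: Rle_lt_trans (sum_f_R0_tail_le _ _) (HN N (leqnn N)).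
  exists N => n m /leP Hn /leP Hm; rewrite /R_dist.
  have := near_N n Hn; have := near_N m Hm.
  have := Rabs_triang (sum_f_R0 a n - sum_f_R0 a N) (- (sum_f_R0 a m - sum_f_R0 a N)).
  rewrite Rabs_Ropp; have -> : sum_f_R0 a n - sum_f_R0 a N + - (sum_f_R0 a m - sum_f_R0 a N)
                       = sum_f_R0 a n - sum_f_R0 a m by ring.
  lra.
Qed.

Lemma cv_tail_le l n :
  Un_cv (sum_f_R0 a) l -> Rabs (l - sum_f_R0 a n) <= K * g ^ n.+1 / (1 - g).
Proof.
  move=> Hl; apply: (Un_cv_abs_le (fun N => sum_f_R0 a (N + n) - sum_f_R0 a n)).
    apply: CV_minus; last by move=> e He; exists 0%N => *; rewrite /R_dist Rminus_diag Rabs_R0.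
    move=> e He; have [N HN] := Hl e He; exists N => m Hm; apply: HN; lia.
  exact: sum_f_R0_tail_le.
Qed.

Lemma cv_abs_le l : Un_cv (sum_f_R0 a) l -> Rabs l <= K / (1 - g).
Proof.
  move=> Hl; have Htail := cv_tail_le l 0 Hl; have H0 := Ha 0.
  have Htri := Rabs_triang (l - a 0%N) (a 0%N).
  rewrite (_ : l - a 0%N + a 0%N = l) in Htri; last ring.
  have -> : K / (1 - g) = K * g ^ 1 / (1 - g) + K * g ^ 0 by rewrite /=; field; lra.
  simpl in Htail, H0 |- *; lra.
Qed.

End GeometricDomination.

Lemma cv_diff_abs_le (a c : nat -> R) la lc K g : 0 <= g < 1 ->
  Un_cv (sum_f_R0 a) la -> Un_cv (sum_f_R0 c) lc ->
  (forall m, Rabs (a m - c m) <= K * g ^ m) -> Rabs (la - lc) <= K / (1 - g).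
Proof.
  move=> Hg Ha Hc Hac; apply: (cv_abs_le (fun m => a m - c m)) => //.
  have -> : sum_f_R0 (fun m => a m - c m) = fun n => sum_f_R0 a n - sum_f_R0 c n.
    by apply: functional_extensionality => n; apply: minus_sum.
  exact: CV_minus.
Qed.

HB.instance Definition _ := Monoid.isComLaw.Build R 0 Rplus
  (fun x y z => esym (Rplus_assoc x y z)) Rplus_comm Rplus_0_l.

Definition digits_val (b : nat) (i : nat -> 'I_b) (n : nat) : nat :=
  (\sum_(k < n) i k * b ^ k)%N.

Lemma INR_expn (b n : nat) : INR (b ^ n)%N = INR b ^ n.
Proof. by elim: n => [|n IH] //; rewrite expnS /= mult_INR IH. Qed.

Lemma digits_valS b i n : digits_val b i n.+1 = (digits_val b i n + i n * b ^ n)%N.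
Proof. by rewrite /digits_val big_ord_recr. Qed.

Lemma big_digits_val (b : nat) (i : nat -> 'I_b) n :
  \big[Rplus/0]_(k < n) (digit (i k) * INR b ^ k) = INR (digits_val b i n).
Proof.
  elim: n => [|n IH]; first by rewrite /digits_val !big_ord0.
  by rewrite big_ord_recr digits_valS /= IH plus_INR mult_INR INR_expn.
Qed.

Lemma partial_pt_val b x i n : partial_pt b x i n = x + INR (digits_val b i n).
Proof. by rewrite /partial_pt big_digits_val. Qed.

Lemma digits_val_lt b i n : (digits_val b i n < b ^ n)%N.
Proof.
  elim: n => [|n IH]; first by rewrite /digits_val big_ord0 expn0.
  rewrite digits_valS expnS; have := ltn_ord (i n).
  by move: (i n : nat) => d Hd; nia.
Qed.

Lemma INR_digits_val_le b i n : INR (digits_val b i n) <= INR b ^ n - 1.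
Proof.
  rewrite -INR_expn; have /leP/le_INR := digits_val_lt b i n.
  by rewrite S_INR; lra.
Qed.

Lemma concat_lt b q (k : word b q) u n (Hn : (n < q)%N) : concat b q k u n = k (Ordinal Hn).
Proof. by rewrite /concat insubT. Qed.

Lemma concat_ge b q (k : word b q) u n : (q <= n)%N -> concat b q k u n = u (n - q)%N.
Proof. by move=> Hn; rewrite /concat insubF // ltnNge Hn. Qed.

Section Carry.

Variables (b : nat) (hb : (0 < b)%N).

Fixpoint all_top (i : nat -> 'I_b) n : bool :=
  if n is n'.+1 then all_top i n' && (i n' == b.-1 :> nat) else true.

Fixpoint all_zero (i : nat -> 'I_b) n : bool :=
  if n is n'.+1 then all_zero i n' && (i n' == 0%N :> nat) else true.

Definition succ_digit (d : 'I_b) : 'I_b := Ordinal (ltn_pmod d.+1 hb).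
Definition pred_digit (d : 'I_b) : 'I_b := Ordinal (ltn_pmod (d + b.-1) hb).

(* Adding (resp. subtracting) one to the b-adic integer [sum_n i n b^n]: digit [n]
   moves iff all lower digits are [b - 1] (resp. [0]). *)
Definition succ_digits (i : nat -> 'I_b) n := if all_top i n then succ_digit (i n) else i n.
Definition pred_digits (i : nat -> 'I_b) n := if all_zero i n then pred_digit (i n) else i n.

Lemma succ_digits_val i n :
  (digits_val b (succ_digits i) n + all_top i n * b ^ n = digits_val b i n + 1)%N.
Proof.
  elim: n => [|n IH]; first by rewrite /digits_val !big_ord0 /= expn0.
  rewrite !digits_valS expnS /=; have Hin := ltn_ord (i n).
  have -> : nat_of_ord (succ_digits i n) = if all_top i n then ((i n).+1 %% b)%N else i n.
    by rewrite /succ_digits; case: (all_top i n).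
  move: IH; case: (all_top i n) => /= IH; last by nia.
  case: eqP => [top | not_top] /=.
  - rewrite top prednK // modnn.
    set P := (b ^ n)%N in IH *; rewrite [in (b * P)%N](_ : b = b.-1.+1); [nia | lia].
  - by rewrite modn_small; [nia | lia].
Qed.

Lemma all_top_pred_digits i n : all_top (pred_digits i) n = all_zero i n.
Proof.
  elim: n => [|n IH] //=; rewrite IH /pred_digits.
  case: (all_zero i n) => //=; have Hin := ltn_ord (i n).
  apply/eqP; case: eqP => [-> | Hn0]; first by rewrite add0n modn_small //; lia.
  have -> : (i n + b.-1 = (i n).-1 + b)%N by lia.
  by rewrite modnDr modn_small; lia.
Qed.

Lemma succ_pred_digits i n : succ_digits (pred_digits i) n = i n.
Proof.
  rewrite /succ_digits all_top_pred_digits /pred_digits; case: (all_zero i n) => //.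
  apply: val_inj => /=; have Hin := ltn_ord (i n).
  case: (posnP (i n)) => [-> | Hpos].
    by rewrite add0n (modn_small (m := b.-1)) ?prednK ?modnn //; lia.
  have -> : (i n + b.-1 = (i n).-1 + b)%N by lia.
  by rewrite modnDr (modn_small (m := (i n).-1)) ?prednK ?modn_small //; lia.
Qed.

Lemma all_top_prefix (i j : nat -> 'I_b) n :
  (forall m, (m < n)%N -> i m = j m) -> all_top i n = all_top j n.
Proof.
  elim: n => [|n IH] //= Hij.
  by rewrite IH => [|m Hm]; [rewrite Hij | apply: Hij; lia].
Qed.

Lemma succ_digits_prefix (i j : nat -> 'I_b) n :
  (forall m, (m <= n)%N -> i m = j m) -> succ_digits i n = succ_digits j n.
Proof.
  move=> Hij; rewrite /succ_digits (all_top_prefix i j) => [|m Hm]; last by apply: Hij; lia.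
  by rewrite Hij.
Qed.

Lemma succ_digits_concat_onto q (k' : word b q) : exists k : word b q,
  forall u, exists u', succ_digits (concat b q k u) = concat b q k' u'.
Proof.
  pose zero := fun _ : nat => (Ordinal hb : 'I_b).
  set k : word b q := [ffun j : 'I_q => pred_digits (concat b q k' zero) j].
  exists k => u; exists (fun n => succ_digits (concat b q k u) (n + q)).
  apply: functional_extensionality => n; case: (ltnP n q) => Hn; last first.
    by rewrite (concat_ge _ _ _ _ _ Hn) subnK.
  rewrite (concat_lt _ _ _ _ _ Hn) (succ_digits_prefix _ (pred_digits (concat b q k' zero))).
    by rewrite succ_pred_digits (concat_lt _ _ _ _ _ Hn).
  move=> m Hm; have Hmq : (m < q)%N by lia.
  by rewrite (concat_lt _ _ _ _ _ Hmq) /k ffunE.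
Qed.

End Carry.

Lemma pow_INR_ge2 b m : (2 <= b)%N -> 2 <= INR b ^ m.+1.
Proof.
  move=> /leP/le_INR /= Hb; elim: m => [|m IH] /=; first lra.
  by rewrite /= in IH; nra.
Qed.

Lemma continuity_bounded (f : R -> R) a c : a <= c ->
  (forall x, a <= x <= c -> continuity_pt f x) ->
  exists M, 0 <= M /\ forall x, a <= x <= c -> Rabs (f x) <= M.
Proof.
  move=> Hac Hf.
  have [xM [HM _]] := continuity_ab_maj (fun x => Rabs (f x)) a c Hac
    (fun x Hx => continuity_pt_comp f Rabs x (Hf x Hx) (Rcontinuity_abs _)).
  by exists (Rabs (f xM)); split; [apply: Rabs_pos | apply: HM].
Qed.

Lemma derive_periodic (f df : R -> R) :
  (forall x, f (x + 1) = f x) -> (forall x, derivable_pt_lim f x (df x)) ->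
  forall x, df (x + 1) = df x.
Proof.
  move=> Hper Hd x; apply: esym (uniqueness_limite f x _ _ (Hd x) _).
  have -> : f = Ranalysis1.comp f (fun y => y + 1).
    by apply: functional_extensionality => y; rewrite /Ranalysis1.comp Hper.
  rewrite -[df (x + 1)]Rmult_1_r.
  apply: (derivable_pt_lim_comp (fun y => y + 1) f x 1 _ _ (Hd (x + 1))).
  move=> e He; exists (mkposreal 1 Rlt_0_1) => h Hh _.
  by rewrite (_ : _ - 1 = 0) ?Rabs_R0 //; field.
Qed.

Lemma periodic_add_bool (f : R -> R) (c : bool) z :
  (forall x, f (x + 1) = f x) -> f (z + INR c) = f z.
Proof. by case: c => Hper /=; rewrite ?Hper ?Rplus_0_r. Qed.

Section SeriesTerms.

Variables (b : nat) (g : R) (psi dpsi : R -> R).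
Hypotheses (Hb : (2 <= b)%N) (Hg : 0 <= g < 1)
  (Hderiv : forall x, derivable_pt_lim psi x (dpsi x))
  (Hcont : forall x, continuity_pt dpsi x).

(* [S_arg i m y] is the point [y(i_1 ... i_(m+1))] at which the [m]-th term
   of [S(y, i)] evaluates [psi] (terms are indexed from 0). *)
Definition S_arg (i : nat -> 'I_b) m y := (y + INR (digits_val b i m.+1)) / INR b ^ m.+1.
Definition S_term (i : nat -> 'I_b) m y := g ^ m * psi (S_arg i m y).
Definition S'_term (i : nat -> 'I_b) m y := g ^ m * (dpsi (S_arg i m y) / INR b ^ m.+1).

Lemma Sf_series i y : Sf b g psi y i = series (fun m => S_term i m y).
Proof.
  congr series; apply: functional_extensionality => m.
  by rewrite /S_term /S_arg partial_pt_val.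
Qed.

Lemma S_arg_range i m y : -3 < y < 3 -> -2 <= S_arg i m y <= 2.
Proof.
  move=> Hy; have HB := pow_INR_ge2 b m Hb.
  have Hv := INR_digits_val_le b i m.+1; have Hv0 := pos_INR (digits_val b i m.+1).
  rewrite /S_arg; split.
  - apply: (Rmult_le_reg_r (INR b ^ m.+1)); first lra.
    by rewrite /Rdiv Rmult_assoc Rinv_l; nra.
  - apply: (Rmult_le_reg_r (INR b ^ m.+1)); first lra.
    by rewrite /Rdiv Rmult_assoc Rinv_l; nra.
Qed.

Lemma inv_pow_INR_le1 m : 0 < / INR b ^ m.+1 <= 1.
Proof.
  have HB := pow_INR_ge2 b m Hb; split; first by apply: Rinv_0_lt_compat; lra.
  by rewrite -Rinv_1; apply: Rinv_le_contravar; lra.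
Qed.

Lemma S_arg_dist i m x y : Rabs (S_arg i m x - S_arg i m y) <= Rabs (x - y).
Proof.
  have [Hpos Hle1] := inv_pow_INR_le1 m; have HB := pow_INR_ge2 b m Hb.
  rewrite /S_arg (_ : _ - _ = (x - y) * / INR b ^ m.+1); last by field; lra.
  rewrite Rabs_mult (Rabs_right (/ _)); last lra.
  by have := Rabs_pos (x - y); nra.
Qed.

Lemma pow_mul_diff_le m c c' M : 0 <= M -> Rabs (c - c') <= M ->
  Rabs (g ^ m * c - g ^ m * (c')) <= M * g ^ m.
Proof.
  move=> HM Hc; have Hgm := pow_le g m (proj1 Hg).
  rewrite -Rmult_minus_distr_l Rabs_mult Rabs_right; last lra.
  by rewrite Rmult_comm; apply: Rmult_le_compat_r.
Qed.

Lemma S'_term_diff_le i m x y M : 0 <= M ->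
  Rabs (dpsi (S_arg i m x) - dpsi (S_arg i m y)) <= M ->
  Rabs (S'_term i m x - S'_term i m y) <= M * g ^ m.
Proof.
  move=> HM Hd; apply: pow_mul_diff_le => //.
  have [Hpos Hle1] := inv_pow_INR_le1 m; have HB := pow_INR_ge2 b m Hb.
  rewrite (_ : _ - _ = (dpsi (S_arg i m x) - dpsi (S_arg i m y)) * / INR b ^ m.+1);
    last by field; lra.
  rewrite Rabs_mult (Rabs_right (/ _)); last lra.
  by have := Rabs_pos (dpsi (S_arg i m x) - dpsi (S_arg i m y)); nra.
Qed.

Lemma S_arg_deriv i m y : derivable_pt_lim (S_arg i m) y (/ INR b ^ m.+1).
Proof.
  have HB := pow_INR_ge2 b m Hb; move=> eps Heps; exists (mkposreal 1 Rlt_0_1) => h Hh _.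
  rewrite /S_arg (_ : _ - _ = 0); first by rewrite Rabs_R0.
  by field; lra.
Qed.

Lemma S_term_deriv i m y : derivable_pt_lim (S_term i m) y (S'_term i m y).
Proof.
  exact: derivable_pt_lim_scal (derivable_pt_lim_comp _ _ _ _ _ (S_arg_deriv i m y) (Hderiv _)).
Qed.

Lemma S'_term_cont i m y : continuity_pt (S'_term i m) y.
Proof.
  have HS := derivable_continuous_pt _ _ (exist _ _ (S_arg_deriv i m y)).
  apply: continuity_pt_scal; apply: continuity_pt_div.
  - exact: continuity_pt_comp HS (Hcont _).
  - exact: continuity_pt_const.
  - by have := pow_INR_ge2 b m Hb; lra.
Qed.

Lemma S_term_abs_le i m y M : -3 < y < 3 ->
  (forall x, -2 <= x <= 2 -> Rabs (psi x) <= M) -> Rabs (S_term i m y) <= M * g ^ m.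
Proof.
  move=> Hy HM; have Hgm := pow_le g m (proj1 Hg).
  rewrite /S_term Rabs_mult Rabs_right; last lra.
  by rewrite Rmult_comm; apply/Rmult_le_compat_r/HM/S_arg_range.
Qed.

Lemma S'_term_abs_le i m y M : -3 < y < 3 -> 0 <= M ->
  (forall x, -2 <= x <= 2 -> Rabs (dpsi x) <= M) -> Rabs (S'_term i m y) <= M * g ^ m.
Proof.
  move=> Hy HM0 HM; have Hgm := pow_le g m (proj1 Hg).
  rewrite /S'_term Rabs_mult Rabs_right; last lra.
  rewrite Rmult_comm; apply: Rmult_le_compat_r => //.
  have [Hpos Hle1] := inv_pow_INR_le1 m.
  rewrite /Rdiv Rabs_mult (Rabs_right (/ _)); last lra.
  by have := HM _ (S_arg_range i m y Hy); have := Rabs_pos (dpsi (S_arg i m y)); nra.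
Qed.

Let psi_cont x : continuity_pt psi x := derivable_continuous_pt _ _ (exist _ _ (Hderiv x)).

Lemma Sf_cv i y : -3 < y < 3 -> Un_cv (sum_f_R0 (fun m => S_term i m y)) (Sf b g psi y i).
Proof.
  move=> Hy; have [M [_ HM]] := continuity_bounded psi (-2) 2 ltac:(lra) (fun x _ => psi_cont x).
  by rewrite Sf_series; apply/series_cv/(geom_dominated_cv _ M g Hg) => m; apply: S_term_abs_le.
Qed.

Lemma dpsi_bounded : exists M, 0 <= M /\ forall x, -2 <= x <= 2 -> Rabs (dpsi x) <= M.
Proof. by apply: continuity_bounded => [|x _]; [lra | apply: Hcont]. Qed.

Lemma S'_series_cv i y : -3 < y < 3 ->
  Un_cv (sum_f_R0 (fun m => S'_term i m y)) (series (fun m => S'_term i m y)).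
Proof.
  move=> Hy; have [M [HM0 HM]] := dpsi_bounded.
  by apply/series_cv/(geom_dominated_cv _ M g Hg) => m; apply: S'_term_abs_le.
Qed.

Let r3 : posreal := mkposreal 3 (IZR_lt 0 3 erefl).

Let Boule_r3 y : Boule 0 r3 y <-> -3 < y < 3.
Proof. by rewrite /Boule /= Rminus_0_r; split => [/Rabs_def2 | ?]; [lra | apply: Rabs_def1; lra]. Qed.

Lemma S'_partial_sums_CVU i :
  CVU (fun n y => sum_f_R0 (fun m => S'_term i m y) n)
      (fun y => series (fun m => S'_term i m y)) 0 r3.
Proof.
  have [M [HM0 HM]] := dpsi_bounded; move=> eps Heps.
  have [N HN] := geom_tail_vanish HM0 Hg Heps.
  exists N => n y Hn /Boule_r3 Hy.
  apply: (Rle_lt_trans _ _ _ _ (HN n (introT leP Hn))).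
  exact: (cv_tail_le _ M g Hg (fun m => S'_term_abs_le i m y M Hy HM0 HM) _ n (S'_series_cv i y Hy)).
Qed.

Lemma Sf'_cv i x : -3 < x < 3 ->
  Un_cv (sum_f_R0 (fun m => S'_term i m x)) (Sf' b g psi x i).
Proof.
  move=> Hx; rewrite /Sf'.
  have partial_deriv y n :
      derivable_pt_lim (fun z => sum_f_R0 (fun m => S_term i m z) n) y
                       (sum_f_R0 (fun m => S'_term i m y) n).
    elim: n => [|n IH]; first exact: S_term_deriv.
    exact: derivable_pt_lim_plus IH (S_term_deriv i n.+1 y).
  have partial_cont n y : continuity_pt (fun z => sum_f_R0 (fun m => S'_term i m z) n) y.
    elim: n => [|n IH]; first exact: S'_term_cont.
    exact: continuity_pt_plus IH (S'_term_cont i n.+1 y).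
  have Hder := derivable_pt_lim_CVU _ _ (fun y => Sf b g psi y i) _ x 0 r3
    (proj2 (Boule_r3 x) Hx) (fun y n _ => partial_deriv y n)
    (fun y Hy => Sf_cv i y (proj1 (Boule_r3 y) Hy)) (S'_partial_sums_CVU i)
    (CVU_continuity _ _ _ _ (S'_partial_sums_CVU i) (fun n y _ => partial_cont n y)).
  by rewrite (deriv_at_eq _ _ _ Hder); apply: S'_series_cv.
Qed.

Lemma Sf_Sf'_equicontinuous eps : 0 < eps -> exists r, 0 < r /\
  forall x y, -3 < x < 3 -> -3 < y < 3 -> Rabs (x - y) < r -> forall i,
    Rabs (Sf b g psi x i - Sf b g psi y i) <= eps /\
    Rabs (Sf' b g psi x i - Sf' b g psi y i) <= eps.
Proof.
  move=> Heps; have Heps' : 0 < eps * (1 - g) by nra.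
  have [d1 Hd1] := @Heine_cor2 psi (-2) 2 (fun x _ => psi_cont x) (mkposreal _ Heps').
  have [d2 Hd2] := @Heine_cor2 dpsi (-2) 2 (fun x _ => Hcont x) (mkposreal _ Heps').
  exists (Rmin d1 d2); split; first by apply: Rmin_pos; apply: cond_pos.
  move=> x y Hx Hy Hxy i.
  have close m : Rabs (S_arg i m x - S_arg i m y) < d1 /\ Rabs (S_arg i m x - S_arg i m y) < d2.
    have := Rle_lt_trans _ _ _ (S_arg_dist i m x y) Hxy.
    by have := Rmin_l d1 d2; have := Rmin_r d1 d2; lra.
  have Ax m := S_arg_range i m x Hx; have Ay m := S_arg_range i m y Hy.
  rewrite -(_ : eps * (1 - g) / (1 - g) = eps); last by field; lra.
  split; apply: (cv_diff_abs_le _ _ _ _ _ g Hg).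
  - exact: Sf_cv.
  - exact: Sf_cv.
  - move=> m; apply: pow_mul_diff_le; first lra.
    exact/Rlt_le/(Hd1 _ _ (Ax m) (Ay m) (proj1 (close m))).
  - exact: Sf'_cv.
  - exact: Sf'_cv.
  - move=> m; apply: S'_term_diff_le; first lra.
    exact/Rlt_le/(Hd2 _ _ (Ax m) (Ay m) (proj2 (close m))).
Qed.

Hypothesis Hper : forall x, psi (x + 1) = psi x.

Let hb : (0 < b)%N := ltnW Hb.

Lemma S_arg_succ i m y :
  S_arg i m (y + 1) = S_arg (succ_digits b hb i) m y + INR (all_top b i m.+1).
Proof.
  have HB := pow_INR_ge2 b m Hb.
  have Hval := f_equal INR (succ_digits_val b hb i m.+1).
  rewrite !plus_INR mult_INR INR_expn in Hval; change (INR 1) with 1 in Hval.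
  rewrite /S_arg; apply: (Rmult_eq_reg_r (INR b ^ m.+1)); last lra.
  by rewrite Rmult_plus_distr_r /Rdiv !Rmult_assoc Rinv_l ?Rmult_1_r; lra.
Qed.

Lemma Sf_succ y i : Sf b g psi (y + 1) i = Sf b g psi y (succ_digits b hb i).
Proof.
  rewrite !Sf_series; congr series; apply: functional_extensionality => m.
  by rewrite /S_term S_arg_succ periodic_add_bool.
Qed.

Lemma Sf'_succ y i : -3 < y -> y + 1 < 3 ->
  Sf' b g psi (y + 1) i = Sf' b g psi y (succ_digits b hb i).
Proof.
  move=> Hy1 Hy2; apply: (UL_sequence _ _ _ (Sf'_cv i (y + 1) ltac:(lra))).
  have -> : (fun m => S'_term i m (y + 1)) = (fun m => S'_term (succ_digits b hb i) m y).
    apply: functional_extensionality => m; rewrite /S'_term S_arg_succ periodic_add_bool //.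
    exact: derive_periodic Hper Hderiv.
  by apply: Sf'_cv; lra.
Qed.

End SeriesTerms.

Lemma sum_const (T : finType) (c : R) : \big[Rplus/0]_(v : T) c = INR #|T| * c.
Proof.
  rewrite big_const; elim: #|T| => [|n IH] /=; first ring.
  by rewrite IH; case: n {IH} => [|n] /=; ring.
Qed.

Lemma sum_two_const (T : finType) (k l : T) (F : T -> R) A B C : k != l ->
  F k = A -> F l = B -> (forall v, v != k -> v != l -> F v = C) ->
  \big[Rplus/0]_(v : T) F v = A + B + (INR #|T| - 2) * C.
Proof.
  move=> Hkl HA HB Hc; have Hlk : l != k by rewrite eq_sym.
  have split_kl (G : T -> R) : \big[Rplus/0]_(v : T) G v =
      G k + (G l + \big[Rplus/0]_(v | (true && (v != k)) && (v != l)) G v).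
    by rewrite (bigD1 k) // (bigD1 l).
  have := split_kl (fun _ => C); rewrite sum_const => Hconst.
  rewrite split_kl HA HB (eq_bigr (fun _ => C)); first lra.
  by move=> v /andP [/andP [_ Hvk] Hvl]; apply: Hc.
Qed.

Definition testfun {b q : nat} (al : R) (k l u v : word b q) : R :=
  if (u == k) || (u == l) then (if v == u then 1 else if (v == k) || (v == l) then 0 else al)
  else (if (v == k) || (v == l) then / al else 1).

Lemma testfun_ge0 b q al (k l u v : word b q) : 0 < al -> 0 <= testfun al k l u v.
Proof.
  by move=> Hal; have := Rinv_0_lt_compat _ Hal; rewrite /testfun; repeat case: ifP => _; lra.
Qed.

Lemma testfun_mul_ge1 b q al (k l u v : word b q) : 1 < al ->
  ~ (u = k /\ v = l) -> ~ (u = l /\ v = k) -> 1 <= testfun al k l u v * testfun al k l v u.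
Proof.
  move=> Hal Hkl Hlk; have Hinv : al * / al = 1 by field; lra.
  rewrite /testfun; case Hu: ((u == k) || (u == l)); case Hv: ((v == k) || (v == l)).
  - case: (eqVneq v u) => [_ | Hvu] /=; first lra.
    exfalso; move/orP: Hu => [/eqP Eu | /eqP Eu]; move/orP: Hv => [/eqP Ev | /eqP Ev];
      subst; rewrite ?eqxx // in Hvu.
    + exact: Hkl (conj erefl erefl).
    + exact: Hlk (conj erefl erefl).
  - have -> : (v == u) = false by apply/eqP => Evu; rewrite Evu Hu in Hv.
    by lra.
  - have -> : (u == v) = false by apply/eqP => Euv; rewrite Euv Hv in Hu.
    by rewrite Rmult_comm; lra.
  - lra.
Qed.

Lemma testfun_row_sum b q al (k l u : word b q) : k != l ->
  \big[Rplus/0]_(v : word b q) testfun al k l u v =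
  if (u == k) || (u == l) then 1 + (INR (b ^ q)%N - 2) * al
  else / al + / al + (INR (b ^ q)%N - 2) * 1.
Proof.
  move=> Hkl; have card_words : #|{ffun 'I_q -> 'I_b}| = (b ^ q)%N.
    by rewrite card_ffun !card_ord.
  case Hu: ((u == k) || (u == l)); last first.
    rewrite (sum_two_const _ _ _ _ (/ al) (/ al) 1 Hkl) ?card_words //; rewrite /testfun Hu.
    - by rewrite eqxx.
    - by rewrite eqxx orbT.
    - by move=> v /negbTE-> /negbTE->.
  pose o := if u == k then l else k.
  have Huo : u != o by rewrite /o; case: (eqVneq u k) => [-> | Huk] //; move: Hu; rewrite (negbTE Huk).
  have kl_uo v : ((v == k) || (v == l)) = ((v == u) || (v == o)).
    rewrite /o; move: Hu; case: (eqVneq u k) => [-> | Huk] //= /eqP->; exact: orbC.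
  rewrite (sum_two_const _ _ _ _ 1 0 al Huo) ?card_words; first ring.
  - by rewrite /testfun Hu eqxx.
  - by rewrite /testfun Hu eq_sym (negbTE Huo) kl_uo eqxx orbT.
  - by move=> v Hvu Hvo; rewrite /testfun Hu (negbTE Hvu) kl_uo (negbTE Hvu) (negbTE Hvo).
Qed.

Definition cell (M : nat) (x : R) : nat := Z.to_nat (Int_part (INR M * x)).

Lemma cell_spec M x : 0 <= x -> INR (cell M x) <= INR M * x < INR (cell M x) + 1.
Proof.
  move=> Hx; have [H1 H2] := base_Int_part (INR M * x); have HM := pos_INR M.
  have Hpos : (0 <= Int_part (INR M * x))%Z.
    suff : (-1 < Int_part (INR M * x))%Z by lia.
    by apply: lt_IZR; nra.
  rewrite /cell INR_IZR_INZ Z2Nat.id //; lra.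
Qed.

Lemma cell_lt M x : (0 < M)%N -> 0 <= x < 1 -> (cell M x < M)%N.
Proof.
  move=> /ltP/lt_0_INR HM Hx; have [H1 _] := cell_spec M x (proj1 Hx).
  by apply/ltP; apply: INR_lt; nra.
Qed.

Lemma cell_eq M x j : 0 <= x -> INR j <= INR M * x < INR j + 1 -> cell M x = j.
Proof.
  move=> Hx Hj; have [H1 H2] := cell_spec M x Hx.
  have /INR_lt A : INR (cell M x) < INR j.+1 by rewrite S_INR; lra.
  have /INR_lt B : INR j < INR (cell M x).+1 by rewrite S_INR; lra.
  lia.
Qed.

Lemma null_sub (A B : R -> Prop) : null_set B -> (forall x, A x -> B x) -> null_set A.
Proof.
  move=> HB HAB eps He; have [a [c [Hac [Hcov Hlen]]]] := HB eps He.
  by exists a, c; split; [| split=> // x /HAB /Hcov].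
Qed.

Lemma null_countable (g : nat -> R) : null_set (fun x => exists n, x = g n).
Proof.
  move=> eps He; pose w n := eps / 4 * (/ 2) ^ n.
  have Hw n : 0 < w n by apply: Rmult_lt_0_compat; [lra | apply: pow_lt; lra].
  exists (fun n => g n - w n), (fun n => g n + w n); split; first by move=> n; have := Hw n; lra.
  split; first by move=> _ [n ->]; exists n; have := Hw n; lra.
  move=> N; have -> : sum_f_R0 (fun n => g n + w n - (g n - w n)) N = eps * (1 - (/ 2) ^ N.+1).
    by elim: N => [|N IH] /=; rewrite ?IH /w /=; field.
  by have := pow_lt (/ 2) N.+1 ltac:(lra); nra.
Qed.

Lemma esssup_le_everywhere (f : R -> R) c :
  (forall x, 0 <= x < 1 -> f x <= c) -> esssup_le f c.
Proof.
  move=> Hf; apply: (null_sub _ _ (null_countable (fun _ => 0))) => x [Hx Hlt].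
  by have := Hf x Hx; lra.
Qed.

Lemma Rdiv_lt_iff a x M : 0 < M -> (a / M < x <-> a < M * x).
Proof.
  move=> HM; rewrite -{2}(_ : M * (a / M) = a); last by field; lra.
  by split=> H; [apply: Rmult_lt_compat_l | apply: Rmult_lt_reg_l H].
Qed.

Lemma Rlt_div_iff a x M : 0 < M -> (x < a / M <-> M * x < a).
Proof.
  move=> HM; rewrite -{2}(_ : M * (a / M) = a); last by field; lra.
  by split=> H; [apply: Rmult_lt_compat_l | apply: Rmult_lt_reg_l H].
Qed.

(* Off the null grid [{j / M}], membership in [{f > c}] is decided by the cell. *)
Lemma measurable01_step (M : nat) (F : nat -> R) (f : R -> R) : (0 < M)%N ->
  (forall x, 0 <= x < 1 -> f x = F (cell M x)) -> measurable01 f.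
Proof.
  move=> HM0 Hf c; have HM : 0 < INR M by apply/lt_0_INR/ltP.
  pose slab n x := INR n < INR M * x < INR n + 1.
  pose A n x := (n < M)%N /\ c < F n /\ slab n x.
  have A_borel n : borel (A n).
    case: (classic ((n < M)%N /\ c < F n)) => [[HnM HcF] | Hn].
      apply: (borel_ext _ _ (borel_interval (INR n / INR M) ((INR n + 1) / INR M))) => x.
      by rewrite Rdiv_lt_iff // Rlt_div_iff //; rewrite /A /slab; tauto.
    apply: (borel_ext _ _ (borel_interval 0 0)) => x.
    by split=> [[H0 H0'] | [HnM [HcF _]]]; [lra | case: Hn].
  exists (fun x => exists n, A n x), (fun x => exists n : nat, x = INR n / INR M).
  split; first exact: borel_union.
  split; first exact: null_countable.
  move=> x [[[Hx Hc] HnB] | [[n [HnM [HcF [Hn1 Hn2]]]] HnA]].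
  - have [H1 H2] := cell_spec M x (proj1 Hx); exists (cell M x).
    case: (Rle_lt_or_eq_dec _ _ H1) => [Hlt | Heq]; last by rewrite Heq; field; lra.
    case: HnB; exists (cell M x); split; first exact: cell_lt.
    by rewrite -Hf.
  - case: HnA; have Hn0 := pos_INR n.
    have /le_INR HnM' : (n.+1 <= M)%coq_nat by apply/leP.
    rewrite S_INR in HnM'; have Hx : 0 <= x < 1 by split; nra.
    by split=> //; rewrite Hf // (cell_eq M x n) //; lra.
Qed.

Lemma E_ed_le {b g psi q x e d e' d'} {k l : word b q} : e <= e' -> d <= d' ->
  E_ed b g psi q x e d k l -> E_ed b g psi q x e' d' k l.
Proof. by move=> He Hd [u [v [H1 H2]]]; exists u, v; split; lra. Qed.

Lemma E_ed_sym b g psi q x e d (k l : word b q) :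
  E_ed b g psi q x e d k l -> E_ed b g psi q x e d l k.
Proof. by move=> [u [v [H1 H2]]]; exists v, u; split; rewrite Rabs_minus_sym. Qed.

Lemma E_ed_refl b (hb : (0 < b)%N) g psi q x e d (k : word b q) :
  0 <= e -> 0 <= d -> E_ed b g psi q x e d k k.
Proof.
  move=> He Hd; exists (fun _ => Ordinal hb), (fun _ => Ordinal hb).
  by rewrite /tangent !Rminus_diag Rabs_R0.
Qed.

Lemma not_E_margin b g psi q t (k l : word b q) :
  ~ E b g psi q t k l -> exists m, 0 < m /\ ~ E_ed b g psi q t m m k l.
Proof.
  move=> HnE; apply: NNPP => Hno; apply: HnE => e d He Hd; apply: NNPP => HnEd.
  apply: Hno; exists (Rmin e d); split; first exact: Rmin_pos.
  by move/(E_ed_le (Rmin_l e d) (Rmin_r e d)).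
Qed.

Section Tangency.

Variables (b : nat) (g : R) (psi dpsi : R -> R) (q : nat).
Hypotheses (Hb : (2 <= b)%N) (Hg : 0 <= g < 1)
  (Hper : forall x, psi (x + 1) = psi x)
  (Hderiv : forall x, derivable_pt_lim psi x (dpsi x))
  (Hcont : forall x, continuity_pt dpsi x).

(* Tangency is witnessed by values of [S] and [S'], which move by at most [m/4]
   when the base point moves by less than [r]. *)
Lemma not_E_ed_near m : 0 < m -> exists r, 0 < r /\
  forall x t (k l : word b q), -3 < x < 3 -> -3 < t < 3 -> Rabs (x - t) < r ->
  ~ E_ed b g psi q t m m k l -> ~ E_ed b g psi q x (m / 2) (m / 2) k l.
Proof.
  move=> Hm; have Hm4 : 0 < m / 4 by lra.
  have [r [Hr Hrr]] := Sf_Sf'_equicontinuous b g psi dpsi Hb Hg Hderiv Hcont (m / 4) Hm4.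
  exists r; split=> // x t k l Hx Ht Hxt HnE [u [v [HS HS']]]; apply: HnE; exists u, v.
  have [A A'] := Hrr x t Hx Ht Hxt (concat b q k u).
  have [B B'] := Hrr x t Hx Ht Hxt (concat b q l v).
  by split; move: HS HS' A A' B B'; split_Rabs; lra.
Qed.

Lemma not_E_ed_succ (k' l' : word b q) : exists k l : word b q,
  forall y m, -3 < y -> y + 1 < 3 ->
  ~ E_ed b g psi q y m m k' l' -> ~ E_ed b g psi q (y + 1) m m k l.
Proof.
  have [k Hk] := succ_digits_concat_onto b (ltnW Hb) q k'.
  have [l Hl] := succ_digits_concat_onto b (ltnW Hb) q l'.
  exists k, l => y m Hy1 Hy2 HnE [u [v Htan]]; apply: HnE.
  have [u' Hu] := Hk u; have [v' Hv] := Hl v; exists u', v'.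
  move: Htan; rewrite /tangent -Hu -Hv.
  by rewrite -!(Sf_succ b g psi Hb Hper) -!(Sf'_succ b g psi dpsi Hb Hg Hderiv Hcont Hper) //; lra.
Qed.

Lemma not_E_ed_locally t (k l : word b q) : -2 < t < 2 -> ~ E b g psi q t k l ->
  exists d, 0 < d /\ forall x, -3 < x < 3 -> Rabs (x - t) < d -> ~ E_ed b g psi q x d d k l.
Proof.
  move=> Ht /not_E_margin [m [Hm HnE]]; have [r [Hr Hrr]] := not_E_ed_near m Hm.
  exists (Rmin r (m / 2)); split; first by apply: Rmin_pos; lra.
  move=> x Hx Hxt /(E_ed_le (Rmin_r r (m / 2)) (Rmin_r r (m / 2))).
  by apply: Hrr HnE; [| lra | have := Rmin_l r (m / 2); lra].
Qed.

Hypothesis HE : forall x, 0 <= x < 1 -> exists k l : word b q, ~ E b g psi q x k l.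

(* At [t = 1] the hypothesis is transported from [t = 0] by a carry. *)
Lemma not_E_ed_gauge t : 0 <= t <= 1 -> exists d, 0 < d /\
  exists k l : word b q, forall x, 0 <= x < 1 -> Rabs (x - t) < d -> ~ E_ed b g psi q x d d k l.
Proof.
  move=> Ht; case: (Rlt_le_dec t 1) => Ht1.
    have [k [l HnE]] := HE t (conj (proj1 Ht) Ht1).
    have Ht2 : -2 < t < 2 by lra.
    have [d [Hd Hdd]] := not_E_ed_locally t k l Ht2 HnE.
    by exists d; split=> //; exists k, l => x Hx; apply: Hdd; lra.
  have [k' [l' HnE]] := HE 0 (conj (Rle_refl 0) Rlt_0_1).
  have [d [Hd Hdd]] := not_E_ed_locally 0 k' l' (conj (IZR_lt (-2) 0 erefl) Rlt_0_2) HnE.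
  have [k [l Hkl]] := not_E_ed_succ k' l'.
  exists (Rmin d 1); split; first by apply: Rmin_pos; lra.
  exists k, l => x Hx Hxt; have Hd1 := Rmin_l d 1; have Hd2 := Rmin_r d 1.
  have /Rabs_def2 Hxt' := Rlt_le_trans _ _ _ Hxt Hd1.
  rewrite (_ : x = x - 1 + 1); last ring.
  move=> /(E_ed_le Hd1 Hd1); apply: Hkl; [lra | lra |].
  by apply: Hdd; [lra | rewrite Rminus_0_r Rabs_left; lra].
Qed.

Lemma uniform_not_E_ed : exists d, 0 < d /\
  forall x, 0 <= x < 1 -> exists k l : word b q, ~ E_ed b g psi q x d d k l.
Proof.
  have gauge t : exists d : posreal, 0 <= t <= 1 -> exists k l : word b q,
      forall x, 0 <= x < 1 -> Rabs (x - t) < d -> ~ E_ed b g psi q x d d k l.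
    case: (classic (0 <= t <= 1)) => Ht; last by exists (mkposreal 1 Rlt_0_1).
    by have [d [Hd Hdd]] := not_E_ed_gauge t Ht; exists (mkposreal d Hd).
  pose delta t := proj1_sig (constructive_indefinite_description _ (gauge t)).
  have Hdelta t : 0 <= t <= 1 -> exists k l : word b q,
      forall x, 0 <= x < 1 -> Rabs (x - t) < delta t -> ~ E_ed b g psi q x (delta t) (delta t) k l.
    exact: proj2_sig (constructive_indefinite_description _ (gauge t)).
  have [d Hd] := Compactness.compactness_value_1d 0 1 delta.
  exists d; split; first exact: cond_pos.
  move=> x Hx; apply: NNPP => Hno; apply: (Hd x (conj (proj1 Hx) (Rlt_le _ _ (proj2 Hx)))).
  move=> [t [Ht [Hxt Hdt]]]; apply: Hno; have [k [l Hkl]] := Hdelta t Ht.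
  by exists k, l => /(E_ed_le Hdt Hdt); apply: Hkl.
Qed.

End Tangency.

Lemma testfun_row_sum_balanced b q al (k l u : word b q) : k != l -> 0 < al ->
  2 - al = (INR (b ^ q) - 2) * al * (al - 1) ->
  \big[Rplus/0]_(v : word b q) testfun al k l u v = INR (b ^ q) - 2 + 2 / al.
Proof.
  move=> Hkl Hal Heq; rewrite testfun_row_sum //; case: ifP => _; last by field; lra.
  rewrite (_ : 2 / al = (2 - al) / al + 1); last by field; lra.
  by rewrite Heq; field; lra.
Qed.

Lemma Sigma_unit_weight_le b q (V : R -> word b q -> word b q -> R) x c : 0 <= c ->
  (forall u, \big[Rplus/0]_(v : word b q) V x u v <= c) -> Sigma b q V (fun _ => 1) x <= c.
Proof.
  move=> Hc Hrow; rewrite /Sigma; apply: (big_ind (fun y => y <= c)) => // [y z | u _].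
    exact: Rmax_lub.
  by rewrite /Rdiv Rinv_1 !Rmult_1_l.
Qed.

Lemma weight_unit : weight (fun _ => 1).
Proof.
  split; first by apply: (measurable01_step 1 (fun _ => 1)).
  by split=> [_ _ | ]; [lra | exists 1 => _ _; rewrite Rinv_1; lra].
Qed.

Section CellwiseTestfun.

Variables (b : nat) (g : R) (psi dpsi : R -> R) (q : nat).
Hypotheses (Hb : (2 <= b)%N) (Hg : 0 <= g < 1)
  (Hper : forall x, psi (x + 1) = psi x)
  (Hderiv : forall x, derivable_pt_lim psi x (dpsi x))
  (Hcont : forall x, continuity_pt dpsi x)
  (HE : forall x, 0 <= x < 1 -> exists k l : word b q, ~ E b g psi q x k l).

(* A pair chosen at the left end of a cell of width [1/M < r] stays non-tangent
   (with half the margin) on the whole cell. *)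
Lemma cellwise_not_E_ed : exists M e (P : nat -> word b q * word b q),
  [/\ (0 < M)%N, 0 < e &
      forall x, 0 <= x < 1 -> ~ E_ed b g psi q x e e (P (cell M x)).1 (P (cell M x)).2].
Proof.
  have [d [Hd Hud]] := uniform_not_E_ed b g psi dpsi q Hb Hg Hper Hderiv Hcont HE.
  have [r [Hr Hrr]] := not_E_ed_near b g psi dpsi q Hb Hg Hderiv Hcont d Hd.
  have [M [HMr /ltP HM]] := archimed_cor1 r Hr.
  have HMR : 0 < INR M by apply/lt_0_INR/ltP.
  pose w0 : word b q := [ffun=> Ordinal (ltnW Hb)].
  have grid_pair j : exists p : word b q * word b q,
      (j < M)%N -> ~ E_ed b g psi q (INR j / INR M) d d p.1 p.2.
    case: (ltnP j M) => Hj; last by exists (w0, w0).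
    have /le_INR : (j.+1 <= M)%coq_nat by apply/leP.
    rewrite S_INR => HjM; have Hj0 := pos_INR j.
    have [k [l Hkl]] : exists k l : word b q, ~ E_ed b g psi q (INR j / INR M) d d k l.
      apply: Hud; split; last by apply/(Rdiv_lt_iff _ _ _ HMR); lra.
      by apply: Rmult_le_pos; [lra | apply/Rlt_le/Rinv_0_lt_compat].
    by exists (k, l).
  pose P j := proj1_sig (constructive_indefinite_description _ (grid_pair j)).
  have HP j : (j < M)%N -> ~ E_ed b g psi q (INR j / INR M) d d (P j).1 (P j).2.
    exact: proj2_sig (constructive_indefinite_description _ (grid_pair j)).
  exists M, (d / 2), P; split=> // [|x Hx]; first lra.
  have [H1 H2] := cell_spec M x (proj1 Hx); have Hc0 := pos_INR (cell M x).
  have Hleft : INR (cell M x) / INR M <= x.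
    apply: (Rmult_le_reg_l (INR M)) => //.
    by rewrite (_ : INR M * (_ / INR M) = INR (cell M x)); [lra | field; lra].
  have Hright : x < INR (cell M x) / INR M + / INR M.
    rewrite (_ : _ + _ = (INR (cell M x) + 1) / INR M); last by field; lra.
    by apply/(Rlt_div_iff _ _ _ HMR); lra.
  have Hpos : 0 <= INR (cell M x) / INR M.
    by apply: Rmult_le_pos; [lra | apply/Rlt_le/Rinv_0_lt_compat].
  by apply: (Hrr x (INR (cell M x) / INR M)) (HP _ (cell_lt M x HM Hx));
    [lra | lra | rewrite Rabs_right; lra].
Qed.

Lemma testfun_cellwise_admissible al M e (P : nat -> word b q * word b q) :
  1 < al -> (0 < M)%N -> 0 < e ->
  (forall x, 0 <= x < 1 -> ~ E_ed b g psi q x e e (P (cell M x)).1 (P (cell M x)).2) ->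
  admissible b g psi q (fun x u v => testfun al (P (cell M x)).1 (P (cell M x)).2 u v).
Proof.
  move=> Hal HM He HP; split.
    by move=> u v; apply: (measurable01_step M (fun j => testfun al (P j).1 (P j).2 u v)).
  split; first by move=> x u v _; apply: testfun_ge0; lra.
  exists e, e; do 2!split=> //; move=> x u v Hx HEuv.
  apply: testfun_mul_ge1 => // -[Hu Hv]; apply: (HP x Hx); rewrite -Hu -Hv //.
  exact: E_ed_sym.
Qed.

End CellwiseTestfun.

Theorem lemma2p6
  (b : nat) (Hb : (2 <= b)%N)
  (gamma : R) (Hgamma : / INR b < gamma < 1)
  (psi dpsi : R -> R)
  (Hper : forall x, psi (x + 1) = psi x)
  (Hderiv : forall x, derivable_pt_lim psi x (dpsi x))
  (Hcont : continuity dpsi)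
  (q : nat) (Hq : (1 <= q)%N) (Hbq : (2 <= b ^ q)%N)
  (HE : forall x, 0 <= x < 1 ->
        exists k l : word b q, ~ E b gamma psi q x k l)
  (alpha : R) (Halpha : 1 < alpha)
  (Heq : 2 - alpha = (INR (b ^ q) - 2) * alpha * (alpha - 1)) :
  sigma_le b gamma psi q (INR (b ^ q) - 2 + 2 / alpha).
Proof.
  move=> eta Heta; have hb : (0 < b)%N := ltnW Hb.
  have Hg : 0 <= gamma < 1.
    by have := Rinv_0_lt_compat _ (lt_0_INR _ (elimT ltP hb)); lra.
  have [M [e [P [HM He HP]]]] := cellwise_not_E_ed b gamma psi dpsi q Hb Hg Hper Hderiv Hcont HE.
  exists (fun _ => 1), (fun x u v => testfun alpha (P (cell M x)).1 (P (cell M x)).2 u v).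
  split; first exact: weight_unit.
  split; first exact: testfun_cellwise_admissible Halpha HM He HP.
  apply: esssup_le_everywhere => x Hx.
  have Hkl : (P (cell M x)).1 != (P (cell M x)).2.
    by apply/eqP => Ekl; apply: (HP x Hx); rewrite Ekl; apply: (E_ed_refl _ hb); lra.
  have HN : 2 <= INR (b ^ q) by apply: (le_INR 2); apply/leP.
  have Hc : 0 <= INR (b ^ q) - 2 + 2 / alpha.
    by have := Rdiv_lt_0_compat 2 alpha Rlt_0_2 ltac:(lra); lra.
  apply: Rle_trans (Sigma_unit_weight_le _ _ _ _ _ Hc _) _; last lra.
  by move=> u; rewrite testfun_row_sum_balanced //; lra.
Qed.
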